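(* Let $V_{\mathrm{total}}\ge0$, $B_{\mathrm{total}}>0$, $R^S_{\mathrm{total}}>0$, $F_{\mathrm{total}}>0$. Problem (P1): minimize $\max_u T_u(B_u,R_u^S,F_u,\eta_u)$ over $B_u>0$, $R_u^S>0$, $F_u>0$, $\eta_u\in[0,1]$ ($u=1,\dots,U$) subject to $\sum_uV_u(B_u,R_u^S,F_u,\eta_u)\le V_{\mathrm{total}}$, $\sum_uB_u\le B_{\mathrm{total}}$, $\sum_uR_u^S\le R^S_{\mathrm{total}}$, $\sum_uF_u\le F_{\mathrm{total}}$. Problem (P2): minimize $\max_uT_u^{\eta\text{-opt}}(B_u,R_u^S,F_u)$ over $B_u>0$, $R_u^S>0$, $F_u>0$ subject to $\sum_uV_u^{\eta\text{-opt}}(B_u,R_u^S,F_u)\le V_{\mathrm{total}}$, $\sum_uB_u\le B_{\mathrm{total}}$, $\sum_uR_u^S\le R^S_{\mathrm{total}}$, $\sum_uF_u\le F_{\mathrm{total}}$. Then the optimal values (infima) of (P1) and (P2) are equal.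
   Context: There are users $u=1,\dots,U$, each with constants $D_u>0$, $r_u>0$, $\rho_u>0$, $\zeta_u\in(0,1)$. For $B_u>0$, $R_u^S>0$, $F_u>0$, $\eta_u\in[0,1]$, write $c_u=B_ur_u$ and define $T_u(B_u,R_u^S,F_u,\eta_u)$ and $V_u(B_u,R_u^S,F_u,\eta_u)$ piecewise: (a) if $\eta_uc_u\ge F_u/\rho_u$, $\zeta_uF_u/\rho_u+(1-\eta_u)c_u\ge R_u^S$, $F_u/\rho_u\ge\frac{\eta_uR_u^S}{\zeta_u\eta_u+1-\eta_u}$: $T_u=\frac{D_u}{R_u^S}(\zeta_u\eta_u+1-\eta_u)$, $V_u=\frac{D_u}{c_u}[c_u-R_u^S-(1-\zeta_u)\frac{F_u}{\rho_u}]$; (b) if $\eta_uc_u\ge F_u/\rho_u$, $\zeta_uF_u/\rho_u+(1-\eta_u)c_u\ge R_u^S$, $F_u/\rho_u<\frac{\eta_uR_u^S}{\zeta_u\eta_u+1-\eta_u}$: $T_u=\frac{\eta_uD_u\rho_u}{F_u}$, $V_u=\frac{D_u}{c_u}[c_u-R_u^S-(1-\zeta_u)\frac{F_u}{\rho_u}]$; (c) if $\eta_uc_u\ge F_u/\rho_u$, $\zeta_uF_u/\rho_u+(1-\eta_u)c_u< R_u^S$: $T_u=\frac{\eta_uD_u\rho_u}{F_u}$, $V_u=\frac{D_u}{c_u}(\eta_uc_u-\frac{F_u}{\rho_u})$; (d) if $\eta_uc_u< F_u/\rho_u$, $(\zeta_u\eta_u+1-\eta_u)c_u\ge R_u^S$: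 $T_u=\frac{D_u}{R_u^S}(\zeta_u\eta_u+1-\eta_u)$, $V_u=\frac{D_u}{c_u}[(\zeta_u\eta_u+1-\eta_u)c_u-R_u^S]$; (e) if $\eta_uc_u< F_u/\rho_u$, $(\zeta_u\eta_u+1-\eta_u)c_u< R_u^S$: $T_u=\frac{D_u}{c_u}$, $V_u=0$. The functions $T_u^{\eta\text{-opt}}(B_u,R_u^S,F_u)$ and $V_u^{\eta\text{-opt}}(B_u,R_u^S,F_u)$ are defined by six exhaustive cases (with $c_u=B_ur_u$): 1. $c_u<R_u^S$: $T^{\eta\text{-opt}}_u=\frac{D_u}{c_u}$, $V^{\eta\text{-opt}}_u=0$. 2. $R_u^S\le c_u<\frac{R_u^S}{\zeta_u}$, $\frac{F_u}{\rho_u}<\frac{c_u-R_u^S}{1-\zeta_u}$: $T^{\eta\text{-opt}}_u=\frac{D_u\rho_u}{F_u(1-\zeta_u)+\rho_uR_u^S}$, $V^{\eta\text{-opt}}_u=\frac{D_u}{c_u}[c_u-R_u^S-(1-\zeta_u)\frac{F_u}{\rho_u}]$. 3. $R_u^S\le c_u<\frac{R_u^S}{\zeta_u}$, $\frac{F_u}{\rho_u}\ge\frac{c_u-R_u^S}{1-\zeta_u}$: $T^{\eta\text{-opt}}_u=\frac{D_u}{c_u}$, $V^{\eta\text{-opt}}_u=0$. 4. $c_u\ge\frac{R_u^S}{\zeta_u}$, $\frac{F_u}{\rho_u}<\frac{R_u^S}{\zeta_u}$: $T^{\eta\text{-opt}}_u=\frac{D_u\rho_u}{F_u(1-\zeta_u)+\rho_uR_u^S}$,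 $V^{\eta\text{-opt}}_u=\frac{D_u}{c_u}[c_u-R_u^S-(1-\zeta_u)\frac{F_u}{\rho_u}]$. 5. $c_u\ge\frac{R_u^S}{\zeta_u}$, $\frac{R_u^S}{\zeta_u}\le\frac{F_u}{\rho_u}<c_u$: $T^{\eta\text{-opt}}_u=\frac{\zeta_uD_u}{R_u^S}$, $V^{\eta\text{-opt}}_u=\frac{D_u}{c_u}[c_u-R_u^S-(1-\zeta_u)\frac{F_u}{\rho_u}]$. 6. $c_u\ge\frac{R_u^S}{\zeta_u}$, $\frac{F_u}{\rho_u}\ge c_u$: $T^{\eta\text{-opt}}_u=\frac{\zeta_uD_u}{R_u^S}$, $V^{\eta\text{-opt}}_u=\frac{D_u}{c_u}(\zeta_uc_u-R_u^S)$. *)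

From mathcomp Require Import all_boot all_order all_algebra.
From mathcomp Require Import all_classical all_reals.
From mathcomp Require Import ereal.
Set Implicit Arguments. Unset Strict Implicit. Unset Printing Implicit Defensive.
Import Order.TTheory GRing.Theory Num.Theory.
Local Open Scope ring_scope.
Local Open Scope classical_set_scope.

Section Defs.
Variable R : realType.

Definition Tu (D r rho zeta B RS F eta : R) : R :=
  let c := B * r in
  if F / rho <= eta * c then
    if RS <= zeta * F / rho + (1 - eta) * c then
      if eta * RS / (zeta * eta + 1 - eta) <= F / rho
      then D / RS * (zeta * eta + 1 - eta)
      else eta * D * rho / F
    else eta * D * rho / F
  else if RS <= (zeta * eta + 1 - eta) * c
       then D / RS * (zeta * eta + 1 - eta)
       else D / c.

Definition Vu (D r rho zeta B RS F eta : R) : R :=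
  let c := B * r in
  if F / rho <= eta * c then
    if RS <= zeta * F / rho + (1 - eta) * c then
      D / c * (c - RS - (1 - zeta) * (F / rho))
    else D / c * (eta * c - F / rho)
  else if RS <= (zeta * eta + 1 - eta) * c
       then D / c * ((zeta * eta + 1 - eta) * c - RS)
       else 0.

Definition Tu_opt (D r rho zeta B RS F : R) : R :=
  let c := B * r in
  if c < RS then D / c
  else if c < RS / zeta then
    if F / rho < (c - RS) / (1 - zeta)
    then D * rho / (F * (1 - zeta) + rho * RS)
    else D / c
  else if F / rho < RS / zeta
    then D * rho / (F * (1 - zeta) + rho * RS)
  else if F / rho < c then zeta * D / RS
  else zeta * D / RS.

Definition Vu_opt (D r rho zeta B RS F : R) : R :=
  let c := B * r in
  if c < RS then 0
  else if c < RS / zeta then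
    if F / rho < (c - RS) / (1 - zeta)
    then D / c * (c - RS - (1 - zeta) * (F / rho))
    else 0
  else if F / rho < RS / zeta
    then D / c * (c - RS - (1 - zeta) * (F / rho))
  else if F / rho < c then D / c * (c - RS - (1 - zeta) * (F / rho))
  else D / c * (zeta * c - RS).

Definition P1_value (U : nat) (D r rho zeta : 'I_U -> R)
    (Vtot Btot RStot Ftot : R) : \bar R :=
  ereal_inf [set z : \bar R | exists (B RS F eta : 'I_U -> R),
     (forall u, 0 < B u /\ 0 < RS u /\ 0 < F u /\ 0 <= eta u <= 1) /\
      \sum_(u < U) Vu (D u) (r u) (rho u) (zeta u) (B u) (RS u) (F u) (eta u) <= Vtot /\
      \sum_(u < U) B u <= Btot /\
      \sum_(u < U) RS u <= RStot /\
      \sum_(u < U) F u <= Ftot /\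
      z = (\big[Num.max/0]_(u < U)
             Tu (D u) (r u) (rho u) (zeta u) (B u) (RS u) (F u) (eta u))%:E].

Definition P2_value (U : nat) (D r rho zeta : 'I_U -> R)
    (Vtot Btot RStot Ftot : R) : \bar R :=
  ereal_inf [set z : \bar R | exists (B RS F : 'I_U -> R),
     (forall u, 0 < B u /\ 0 < RS u /\ 0 < F u) /\
      \sum_(u < U) Vu_opt (D u) (r u) (rho u) (zeta u) (B u) (RS u) (F u) <= Vtot /\
      \sum_(u < U) B u <= Btot /\
      \sum_(u < U) RS u <= RStot /\
      \sum_(u < U) F u <= Ftot /\
      z = (\big[Num.max/0]_(u < U)
             Tu_opt (D u) (r u) (rho u) (zeta u) (B u) (RS u) (F u))%:E].

End Defs.

From mathcomp Require Import all_boot all_order all_algebra.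
From mathcomp Require Import all_classical all_reals.
From mathcomp Require Import ereal.
From mathcomp Require Import ring lra.
Set Implicit Arguments. Unset Strict Implicit. Unset Printing Implicit Defensive.
Import Order.TTheory GRing.Theory Num.Theory.
Local Open Scope ring_scope.

(* In the coordinates c = B r, f = F / rho, s = R^S, the case table (a)-(e)
   evaluates T_u = D * max (1/c, (zeta eta + 1 - eta)/s, eta/f) and
   V_u = D/c * max (0, c - s - (1-zeta) f, eta c - f, (zeta eta + 1 - eta) c - s),
   while the table 1-6 evaluates T_u^opt = D * max (1/c, 1/((1-zeta) f + s), zeta/s)
   and V_u^opt = D/c * max (0, c - s - (1-zeta) f, zeta c - s).  For every eta
   these are termwise dominated, because zeta <= zeta eta + 1 - eta and
   1/((1-zeta) f + s) lies below eta/f or (zeta eta + 1 - eta)/s.  Conversely a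
   single eta (0, f/((1-zeta) f + s), (c-s)/((1-zeta) c) or 1, according to the
   regime) attains both optima.  So every feasible point of (P1) is dominated by
   the same (B, R^S, F) in (P2), and every feasible point of (P2) is realised in
   (P1) by choosing that eta for each user. *)

Section RealFacts.
Variable R : realType.
Implicit Types x y w : R.

Lemma max3_l x y w : y <= x -> w <= x -> Num.max x (Num.max y w) = x.
Proof. by move=> yx wx; rewrite max_l // ge_max yx wx. Qed.

Lemma max3_m x y w : x <= y -> w <= y -> Num.max x (Num.max y w) = y.
Proof. by move=> xy wy; rewrite (max_l wy) (max_r xy). Qed.

Lemma max3_r x y w : x <= w -> y <= w -> Num.max x (Num.max y w) = w.
Proof. by move=> xw yw; rewrite (max_r yw) (max_r xw). Qed.

Lemma ler_pdiv_cross x y u v : 0 < y -> 0 < v -> (x / y <= u / v) = (x * v <= u * y).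
Proof. by move=> y_gt0 v_gt0; rewrite ler_pdivrMr // mulrAC ler_pdivlMr. Qed.

End RealFacts.

Section Normalized.
Variable R : realType.
Variables (c f s z : R).
Hypotheses (c_gt0 : 0 < c) (f_gt0 : 0 < f) (s_gt0 : 0 < s)
  (z_gt0 : 0 < z) (z_lt1 : z < 1).

(* [lra] and [nra] do not see section hypotheses, so proofs copy them first. *)
Local Ltac params :=
  move: (c_gt0) (f_gt0) (s_gt0) (z_gt0) (z_lt1) => ? ? ? ? ?.

Definition Tn (e : R) : R :=
  Num.max (1 / c) (Num.max ((z * e + 1 - e) / s) (e / f)).

Definition Vn (e : R) : R :=
  Num.max 0 (Num.max (c - s - (1 - z) * f)
                     (Num.max (e * c - f) ((z * e + 1 - e) * c - s))).

Definition Tn_opt : R :=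
  Num.max (1 / c) (Num.max (1 / ((1 - z) * f + s)) (z / s)).

Definition Vn_opt : R :=
  Num.max 0 (Num.max (c - s - (1 - z) * f) (z * c - s)).

Lemma mix_ge (e : R) : e <= 1 -> z <= z * e + 1 - e.
Proof.
move=> e_le1; params.
have : 0 <= (1 - e) * (1 - z) by apply: mulr_ge0; lra.
lra.
Qed.

Lemma Tn_cases (e : R) : 0 <= e <= 1 ->
  (if f <= e * c then
     if s <= z * f + (1 - e) * c then
       if e * s / (z * e + 1 - e) <= f then (z * e + 1 - e) / s else e / f
     else e / f
   else if s <= (z * e + 1 - e) * c then (z * e + 1 - e) / s else 1 / c)
  = Tn e.
Proof.
move=> /andP[e_ge0 e_le1]; params; rewrite /Tn.
have a_gt0 : 0 < z * e + 1 - e by apply: lt_le_trans (mix_ge e_le1).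
have zfc : f <= e * c -> z * f <= z * (e * c) by rewrite ler_pM2l.
case: lerP => h1; [case: lerP => h2; [case: lerP => h3|] | case: lerP => h2].
- rewrite ler_pdivrMr // in h3.
  rewrite max3_m // ler_pdiv_cross // ?mul1r; have := zfc h1; lra.
- rewrite ltr_pdivlMr // in h3.
  rewrite max3_r // ler_pdiv_cross // ?mul1r; lra.
- rewrite max3_r // ler_pdiv_cross // ?mul1r; first lra.
  have : e * (z * f + (1 - e) * c) <= e * s by rewrite ler_wpM2l // ltW.
  have : (1 - e) * f <= (1 - e) * (e * c) by rewrite ler_wpM2l // subr_ge0.
  lra.
- rewrite max3_m // ler_pdiv_cross // ?mul1r; first lra.
  have : e * s <= e * ((z * e + 1 - e) * c) by rewrite ler_wpM2l.
  have : (z * e + 1 - e) * (e * c) <= (z * e + 1 - e) * f.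
    by rewrite ler_pM2l // ltW.
  lra.
- rewrite max3_l // ler_pdiv_cross // ?mul1r; lra.
Qed.

Lemma Vn_cases (e : R) : 0 <= e <= 1 ->
  (if f <= e * c then
     if s <= z * f + (1 - e) * c then c - s - (1 - z) * f else e * c - f
   else if s <= (z * e + 1 - e) * c then (z * e + 1 - e) * c - s else 0)
  = Vn e.
Proof.
move=> /andP[e_ge0 e_le1]; params; rewrite /Vn.
case: lerP => h1.
  have gap : 0 <= (1 - z) * (e * c - f) by apply: mulr_ge0; lra.
  case: lerP => h2.
    by rewrite [X in Num.max 0 X]max3_l ?max_r //; lra.
  by rewrite [X in Num.max 0 X]max3_m ?max_r //; lra.
have gap : 0 <= (1 - z) * (f - e * c) by apply: mulr_ge0; lra.
case: lerP => h2.
  by rewrite [X in Num.max 0 X]max3_r ?max_r //; lra.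
by rewrite max_l // !ge_max; apply/and3P; split; lra.
Qed.

Lemma Tn_opt_cases :
  (if c < s then 1 / c
   else if c < s / z then
     if f < (c - s) / (1 - z) then 1 / ((1 - z) * f + s) else 1 / c
   else if f < s / z then 1 / ((1 - z) * f + s)
   else z / s)
  = Tn_opt.
Proof.
params; rewrite /Tn_opt.
have zc_lt : z * c < c by rewrite gtr_pMl.
have zf_gt0 : 0 < (1 - z) * f by apply: mulr_gt0; lra.
have g_gt0 : 0 < (1 - z) * f + s by lra.
case: ltrP => h1.
  by rewrite max3_l // ler_pdiv_cross // ?mul1r; lra.
case: ltrP => h2.
  rewrite ltr_pdivlMr // in h2.
  case: ltrP => h3.
    rewrite ltr_pdivlMr ?subr_gt0 // in h3.
    have hint : z * (f * (1 - z)) <= z * (c - s) by rewrite ler_pM2l // ltW.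
    by rewrite max3_m // ler_pdiv_cross // ?mul1r; lra.
  rewrite ler_pdivrMr ?subr_gt0 // in h3.
  by rewrite max3_l // ler_pdiv_cross // ?mul1r; lra.
rewrite ler_pdivrMr // in h2.
case: ltrP => h3.
  rewrite ltr_pdivlMr // in h3.
  have hint : (1 - z) * (f * z) <= (1 - z) * s by rewrite ler_pM2l ?subr_gt0 // ltW.
  rewrite max3_m // ler_pdiv_cross // ?mul1r; last lra.
  by rewrite -(ler_pM2l z_gt0); lra.
rewrite ler_pdivrMr // in h3.
have hint : (1 - z) * s <= (1 - z) * (f * z) by rewrite ler_pM2l ?subr_gt0.
by rewrite max3_r // ler_pdiv_cross // ?mul1r; lra.
Qed.

Lemma Vn_opt_cases :
  (if c < s then 0
   else if c < s / z then
     if f < (c - s) / (1 - z) then c - s - (1 - z) * f else 0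
   else if f < s / z then c - s - (1 - z) * f
   else if f < c then c - s - (1 - z) * f
   else z * c - s)
  = Vn_opt.
Proof.
params; rewrite /Vn_opt.
have zc_lt : z * c < c by rewrite gtr_pMl.
have zf_gt0 : 0 < (1 - z) * f by apply: mulr_gt0; lra.
case: ltrP => h1.
  by rewrite max_l // ge_max; apply/andP; split; lra.
case: ltrP => h2.
  rewrite ltr_pdivlMr // in h2.
  case: ltrP => h3.
    rewrite ltr_pdivlMr ?subr_gt0 // in h3.
    by rewrite [X in Num.max 0 X]max_l ?max_r //; lra.
  rewrite ler_pdivrMr ?subr_gt0 // in h3.
  by rewrite max_l // ge_max; apply/andP; split; lra.
rewrite ler_pdivrMr // in h2.
have fc_cmp : f <= c -> (1 - z) * f <= (1 - z) * c by rewrite ler_pM2l ?subr_gt0.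
case: ltrP => h3.
  rewrite ltr_pdivlMr // in h3.
  have fc : f <= c by rewrite -(ler_pM2r z_gt0); lra.
  have := fc_cmp fc => hint.
  by rewrite [X in Num.max 0 X]max_l ?max_r //; lra.
case: ltrP => h4.
  have := fc_cmp (ltW h4) => hint.
  by rewrite [X in Num.max 0 X]max_l ?max_r //; lra.
have hint : (1 - z) * c <= (1 - z) * f by rewrite ler_pM2l ?subr_gt0.
by rewrite [X in Num.max 0 X]max_r ?max_r //; lra.
Qed.

Lemma Tn_opt_le (e : R) : 0 <= e <= 1 -> Tn_opt <= Tn e.
Proof.
move=> /andP[e_ge0 e_le1]; params; rewrite /Tn_opt /Tn.
have a_ge := mix_ge e_le1.
have zf_gt0 : 0 < (1 - z) * f by apply: mulr_gt0; lra.
have g_gt0 : 0 < (1 - z) * f + s by lra.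
rewrite !ge_max !le_max lexx /=; apply/andP; split; apply/or3P.
- case: (lerP f (e * ((1 - z) * f + s))) => h.
    by apply: Or33; rewrite ler_pdiv_cross // mul1r.
  have hint : 0 <= (1 - z) * (f - e * ((1 - z) * f + s)) by apply: mulr_ge0; lra.
  by apply: Or32; rewrite ler_pdiv_cross // mul1r; lra.
- by apply: Or32; rewrite ler_pM2r ?invr_gt0.
Qed.

Lemma Vn_opt_le (e : R) : 0 <= e <= 1 -> Vn_opt <= Vn e.
Proof.
move=> /andP[_ e_le1]; rewrite /Vn_opt /Vn !ge_max !le_max !lexx orbT /=.
by apply/or4P; apply: Or44; rewrite lerD2r ler_pM2r ?mix_ge.
Qed.

Lemma Tn_Vn_share0 : c <= s -> Tn 0 <= 1 / c /\ Vn 0 <= 0.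
Proof.
move=> cs; params; rewrite /Tn /Vn mulr0 add0r subr0 !mul0r.
rewrite !ge_max lexx ler_pdiv_cross // !mul1r invr_ge0 (ltW c_gt0) cs lexx /=.
have hint : 0 < (1 - z) * f by apply: mulr_gt0; lra.
by split=> //; apply/and3P; split; lra.
Qed.

Lemma Tn_Vn_share_balanced : (1 - z) * f + s <= c -> z * f <= s ->
  let e := f / ((1 - z) * f + s) in
  [/\ 0 <= e <= 1, Tn e <= 1 / ((1 - z) * f + s) & Vn e <= c - s - (1 - z) * f].
Proof.
move=> gc zfs e; params.
have zf_ge0 : 0 <= (1 - z) * f by apply: mulr_ge0; lra.
have g_gt0 : 0 < (1 - z) * f + s by lra.
have eg : e * ((1 - z) * f + s) = f by rewrite divfK ?gt_eqF.
have ag : (z * e + 1 - e) * ((1 - z) * f + s) = s.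
  have -> : (z * e + 1 - e) * ((1 - z) * f + s)
           = (1 - z) * f + s - (1 - z) * (e * ((1 - z) * f + s)) by ring.
  by rewrite eg; ring.
have e_ge0 : 0 <= e by rewrite divr_ge0 ?ltW.
have e_le1 : e <= 1 by rewrite ler_pdivrMr // mul1r; lra.
split; first by rewrite e_ge0 e_le1.
  by rewrite /Tn !ge_max !ler_pdiv_cross // !mul1r ag eg !lexx gc.
have hq : 0 <= (1 - e) * (c - ((1 - z) * f + s)) by apply: mulr_ge0; lra.
have ht : 0 <= (1 - z) * e * (c - ((1 - z) * f + s)).
  by apply: mulr_ge0; [apply: mulr_ge0|]; lra.
by rewrite /Vn !ge_max lexx /=; apply/and3P; split; lra.
Qed.

Lemma Tn_Vn_share_saturated :
  s <= c -> c <= (1 - z) * f + s -> z * c <= s ->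
  let e := (c - s) / ((1 - z) * c) in
  [/\ 0 <= e <= 1, Tn e <= 1 / c & Vn e <= 0].
Proof.
move=> sc cg zcs e; params.
have zc_gt0 : 0 < (1 - z) * c by apply: mulr_gt0; lra.
have ec : e * ((1 - z) * c) = c - s by rewrite divfK ?gt_eqF.
have ac : (z * e + 1 - e) * c = s.
  have -> : (z * e + 1 - e) * c = c - e * ((1 - z) * c) by ring.
  by rewrite ec; ring.
have ecf : e * c <= f.
  have z1_gt0 : 0 < 1 - z by lra.
  rewrite -(ler_pM2l z1_gt0).
  have -> : (1 - z) * (e * c) = e * ((1 - z) * c) by ring.
  by rewrite ec; lra.
have e_ge0 : 0 <= e by apply: divr_ge0; lra.
have e_le1 : e <= 1 by rewrite ler_pdivrMr // mul1r; lra.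
split; first by rewrite e_ge0 e_le1.
  by rewrite /Tn !ge_max lexx !ler_pdiv_cross // !mul1r ac lexx ecf.
by rewrite /Vn !ge_max lexx ac subrr lexx /= andbT; apply/andP; split; lra.
Qed.

Lemma Tn_Vn_share1 : s <= z * c -> s <= z * f ->
  Tn 1 <= z / s /\ Vn 1 <= Num.max (c - s - (1 - z) * f) (z * c - s).
Proof.
move=> szc szf; params; split.
  by rewrite /Tn mulr1 addrK !ge_max lexx !ler_pdiv_cross // !mul1r szc szf.
rewrite /Vn mulr1 addrK mul1r !ge_max !le_max !lexx !orbT /=.
have zcs : 0 <= z * c - s by lra.
rewrite zcs orbT andbT /=.
by case: (lerP f c) => fc; apply/orP; [left | right]; lra.
Qed.

Lemma exists_optimal_share :
  exists2 e, 0 <= e <= 1 & Tn e = Tn_opt /\ Vn e = Vn_opt.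
Proof.
suff [e e01 [le_T le_V]] :
    exists2 e, 0 <= e <= 1 & Tn e <= Tn_opt /\ Vn e <= Vn_opt.
  by exists e => //; split; apply: le_anti; rewrite ?le_T ?le_V ?Tn_opt_le ?Vn_opt_le.
have balanced : (1 - z) * f + s <= c -> z * f <= s ->
    exists2 e, 0 <= e <= 1 & Tn e <= Tn_opt /\ Vn e <= Vn_opt.
  move=> gc zfs; have [e01 le_T le_V] := Tn_Vn_share_balanced gc zfs.
  exists (f / ((1 - z) * f + s)) => //; split.
    by apply: le_trans le_T _; rewrite /Tn_opt !le_max lexx !orbT.
  by apply: le_trans le_V _; rewrite /Vn_opt !le_max lexx !orbT.
params; have z1_gt0 : 0 < 1 - z by lra.
case: (lerP c s) => cs.
  have [le_T le_V] := Tn_Vn_share0 cs.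
  exists 0; first by rewrite lexx ler01.
  split; first by apply: le_trans le_T _; rewrite /Tn_opt le_max lexx.
  by apply: le_trans le_V _; rewrite /Vn_opt le_max lexx.
case: (lerP s (z * c)) => zc.
  case: (lerP s (z * f)) => zf.
    have [le_T le_V] := Tn_Vn_share1 zc zf.
    exists 1; first by rewrite ler01 lexx.
    split; first by apply: le_trans le_T _; rewrite /Tn_opt !le_max lexx !orbT.
    by apply: le_trans le_V _; rewrite /Vn_opt le_max lexx orbT.
  apply: balanced; last exact: ltW.
  rewrite -(ler_pM2l z_gt0).
  have : (1 - z) * (z * f) <= (1 - z) * s by rewrite ler_pM2l // ltW.
  lra.
case: (lerP ((1 - z) * f + s) c) => gc.
  apply: balanced => //; rewrite -(ler_pM2l z1_gt0).
  have : z * ((1 - z) * f) <= z * (c - s) by rewrite ler_pM2l //; lra.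
  lra.
have [e01 le_T le_V] := Tn_Vn_share_saturated (ltW cs) (ltW gc) (ltW zc).
exists ((c - s) / ((1 - z) * c)) => //; split.
  by apply: le_trans le_T _; rewrite /Tn_opt le_max lexx.
by apply: le_trans le_V _; rewrite /Vn_opt le_max lexx.
Qed.

End Normalized.

Section User.
Variable R : realType.
Variables (D r rho z B RS F : R).
Hypotheses (D_gt0 : 0 < D) (r_gt0 : 0 < r) (rho_gt0 : 0 < rho)
  (z01 : 0 < z < 1) (B_gt0 : 0 < B) (RS_gt0 : 0 < RS) (F_gt0 : 0 < F).

Let z_gt0 : 0 < z. Proof. by case/andP: z01. Qed.
Let z_lt1 : z < 1. Proof. by case/andP: z01. Qed.
Let c_gt0 : 0 < B * r. Proof. exact: mulr_gt0. Qed.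
Let f_gt0 : 0 < F / rho. Proof. exact: divr_gt0. Qed.

Lemma Tu_Tn (e : R) : 0 <= e <= 1 ->
  Tu D r rho z B RS F e = D * Tn (B * r) (F / rho) RS z e.
Proof.
move=> e01; rewrite -(Tn_cases c_gt0 f_gt0 RS_gt0 z_gt0 z_lt1 e01) /Tu.
rewrite -[z * F / rho]mulrA.
have -> : e * D * rho / F = D * (e / (F / rho)) by rewrite invf_div; ring.
have -> : D / RS * (z * e + 1 - e) = D * ((z * e + 1 - e) / RS) by ring.
have -> : D / (B * r) = D * (1 / (B * r)) by ring.
by repeat case: ifP.
Qed.

Lemma Vu_Vn (e : R) : 0 <= e <= 1 ->
  Vu D r rho z B RS F e = D / (B * r) * Vn (B * r) (F / rho) RS z e.
Proof.
move=> e01; rewrite -(Vn_cases c_gt0 f_gt0 RS_gt0 z_gt0 z_lt1 e01) /Vu.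
by rewrite -[z * F / rho]mulrA; repeat case: ifP => _; rewrite ?mulr0.
Qed.

Lemma Tu_opt_Tn_opt :
  Tu_opt D r rho z B RS F = D * Tn_opt (B * r) (F / rho) RS z.
Proof.
rewrite -(Tn_opt_cases c_gt0 f_gt0 RS_gt0 z_gt0 z_lt1) /Tu_opt if_same.
have -> : D * rho / (F * (1 - z) + rho * RS) = D * (1 / ((1 - z) * (F / rho) + RS)).
  have g_gt0 : 0 < F * (1 - z) + rho * RS.
    by rewrite addr_gt0 ?mulr_gt0 ?subr_gt0.
  by field; rewrite ?gt_eqF // mulrC [RS * _]mulrC.
have -> : z * D / RS = D * (z / RS) by ring.
have -> : D / (B * r) = D * (1 / (B * r)) by ring.
by repeat case: ifP.
Qed.

Lemma Vu_opt_Vn_opt :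
  Vu_opt D r rho z B RS F = D / (B * r) * Vn_opt (B * r) (F / rho) RS z.
Proof.
rewrite -(Vn_opt_cases c_gt0 f_gt0 RS_gt0 z_gt0 z_lt1) /Vu_opt.
by repeat case: ifP => _; rewrite ?mulr0.
Qed.

Lemma Tu_Vu_opt_min :
  (forall e, 0 <= e <= 1 ->
     Tu_opt D r rho z B RS F <= Tu D r rho z B RS F e /\
     Vu_opt D r rho z B RS F <= Vu D r rho z B RS F e) /\
  exists2 e, 0 <= e <= 1 &
    Tu D r rho z B RS F e = Tu_opt D r rho z B RS F /\
    Vu D r rho z B RS F e = Vu_opt D r rho z B RS F.
Proof.
have Dc_ge0 : 0 <= D / (B * r) by rewrite divr_ge0 ?ltW.
split=> [e e01|].
  rewrite Tu_Tn // Vu_Vn // Tu_opt_Tn_opt Vu_opt_Vn_opt.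
  split; apply: ler_wpM2l => //; first exact: ltW.
    exact: Tn_opt_le.
  exact: Vn_opt_le.
have [e e01 [Te Ve]] := exists_optimal_share c_gt0 f_gt0 RS_gt0 z_gt0 z_lt1.
by exists e => //; rewrite Tu_Tn // Vu_Vn // Tu_opt_Tn_opt Vu_opt_Vn_opt Te Ve.
Qed.

End User.

Theorem theorem2 (R : realType) (U : nat) (hU : (0 < U)%N)
    (D r rho zeta : 'I_U -> R)
    (hD : forall u, 0 < D u) (hr : forall u, 0 < r u)
    (hrho : forall u, 0 < rho u) (hzeta : forall u, 0 < zeta u < 1)
    (Vtot Btot RStot Ftot : R)
    (hV : 0 <= Vtot) (hB : 0 < Btot) (hRS : 0 < RStot) (hF : 0 < Ftot) :
  P1_value D r rho zeta Vtot Btot RStot Ftot =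
  P2_value D r rho zeta Vtot Btot RStot Ftot.
Proof.
have user_opt u B RS F : 0 < B -> 0 < RS -> 0 < F -> _ :=
  Tu_Vu_opt_min (hD u) (hr u) (hrho u) (hzeta u).
apply: le_anti; apply/andP; split.
  apply: le_ereal_inf => _ [B [RS [F [pos [hVs [hBs [hRSs [hFs ->]]]]]]]].
  have /fin_all_exists2[eta eta01 eta_opt] := fun u =>
    let: conj B_gt0 (conj RS_gt0 F_gt0) := pos u in
    (user_opt u _ _ _ B_gt0 RS_gt0 F_gt0).2.
  exists B, RS, F, eta; split; first by move=> u; have [? [? ?]] := pos u.
  rewrite (eq_bigr _ (fun u _ => (eta_opt u).2)).
  by rewrite (eq_bigr _ (fun u _ => (eta_opt u).1)).
apply/ereal_infP => _ [B [RS [F [eta [pos [hVs [hBs [hRSs [hFs ->]]]]]]]]].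
have le_opt u := let: conj B_gt0 (conj RS_gt0 (conj F_gt0 eta01)) := pos u in
  (user_opt u _ _ _ B_gt0 RS_gt0 F_gt0).1 (eta u) eta01.
apply: le_trans (ereal_inf_lbound _) _.
  exists B, RS, F; split; first by move=> u; have [? [? [? _]]] := pos u.
  split; first by apply: le_trans hVs; apply: ler_sum => u _; exact: (le_opt u).2.
  by do 3 (split; first by []).
by rewrite lee_fin; apply: le_bigmax2 => u _; exact: (le_opt u).1.
Qed.
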